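(* Let $X_1,X_2,\dots,X_n$ be independent random variables uniformly distributed on $[0,1]$, observed sequentially; at time $i$, after seeing $X_i$, one must irrevocably decide whether to select it, the selected values being required to form a monotone decreasing sequence $X_{i_1}>X_{i_2}>\cdots>X_{i_k}$ with $i_1<\cdots<i_k$, and decisions may depend only on $X_1,\dots,X_i$. Let $\widetilde V_n$ be the number of values selected under an optimal policy (one maximizing the expected number of selections); equivalently $\mathbb{E}[\widetilde V_n]=\widetilde v_n(1)$ where $\widetilde v_0\equiv0$ and $\widetilde v_n(x)=(1-x)\widetilde v_{n-1}(x)+\int_0^x\max\{\widetilde v_{n-1}(x),1+\widetilde v_{n-1}(y)\}dy$ for $x\in[0,1]$. Then $\mathbb{E}[\widetilde V_n]=\widetilde v_n(1)\le\sqrt{2n}$ for all $n\ge1$. *)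

From Stdlib Require Import Reals ClassicalEpsilon.
Open Scope R_scope.

(* The Riemann integral of f over [a,b], as a total function: the (unique)
   value RiemannInt pr for some integrability proof pr; if f is not Riemann
   integrable on [a,b] the value is an unspecified real. *)
Definition Rint (f : R -> R) (a b : R) : R :=
  epsilon (inhabits 0)
    (fun I => exists pr : Riemann_integrable f a b, RiemannInt pr = I).

Fixpoint vt (n : nat) (x : R) : R :=
  match n with
  | O => 0
  | S m => (1 - x) * vt m x + Rint (fun y => Rmax (vt m x) (1 + vt m y)) 0 x
  end.

From Stdlib Require Import Reals ClassicalEpsilon Lra Psatz.
From Coquelicot Require Import Coquelicot.
Open Scope R_scope.

(* Write [bellman v x = (1 - x) v(x) + \int_0^x max(v(x), 1 + v(y)) dy], so that
   [vt (n+1) = bellman (vt n)] as soon as [vt n] is continuous (which makes the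
   Riemann integral exist, and holds by induction).  The operator [bellman] is
   monotone, and on [0,1] it maps [c sqrt x] to at most [sqrt (c^2 + 2) sqrt x]:
   after substituting [y = t^2] the integral is piecewise polynomial, with the
   acceptance threshold at [t = sqrt x - 1/c].  Iterating from [vt 0 = 0] gives
   [vt n x <= sqrt (2 n) sqrt x], and [x = 1] is the theorem. *)

Lemma Rint_eq_RInt (f : R -> R) (a b : R) : ex_RInt f a b -> Rint f a b = RInt f a b.
Proof.
  intros Hf. unfold Rint.
  assert (E : exists I, exists pr : Riemann_integrable f a b, RiemannInt pr = I).
  { exists (RiemannInt (ex_RInt_Reals_0 _ _ _ Hf)). eexists; reflexivity. }
  destruct (epsilon_spec (inhabits 0) _ E) as [pr <-].
  symmetry. apply RInt_Reals.
Qed.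

Lemma Rmax_Lipschitz_l (a b c : R) : Rabs (Rmax a c - Rmax b c) <= Rabs (a - b).
Proof. unfold Rmax; repeat destruct Rle_dec; apply Rabs_le; split_Rabs; lra. Qed.

Lemma continuous_Rmax_r (c z : R) : continuous (Rmax c) z.
Proof.
  apply filterlim_locally; intros eps. exists eps; intros y Hy.
  change (Rabs (Rmax c y - Rmax c z) < eps). change (Rabs (y - z) < eps) in Hy.
  rewrite (Rmax_comm c y), (Rmax_comm c z).
  eapply Rle_lt_trans; [apply Rmax_Lipschitz_l | exact Hy].
Qed.

Lemma continuous_of_dominated (h B : R -> R) (x : R) :
  continuous B x -> B x = 0 -> (forall u, Rabs (h u - h x) <= B u) -> continuous h x.
Proof.
  intros HB HBx Hh. apply filterlim_locally; intros eps.
  apply (filter_imp (fun u => ball (B x) eps (B u))); [intros u Hu|].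
  2:{ exact (proj1 (filterlim_locally B (B x)) HB eps). }
  change (Rabs (B u - B x) < eps) in Hu. change (Rabs (h u - h x) < eps).
  rewrite HBx, Rminus_0_r in Hu.
  eapply Rle_lt_trans; [apply Hh | eapply Rle_lt_trans; [apply Rle_abs | exact Hu]].
Qed.

Lemma continuous_sqrt_nonneg (y : R) : 0 <= y -> continuous sqrt y.
Proof. intros Hy. apply continuity_pt_filterlim, continuity_pt_sqrt, Hy. Qed.

Lemma ex_RInt_Rmax_r (c : R) (g : R -> R) (a b : R) :
  (forall y, Rmin a b <= y <= Rmax a b -> continuous g y) ->
  ex_RInt (fun y => Rmax c (g y)) a b.
Proof.
  intros Hg. apply (@ex_RInt_continuous R_CompleteNormedModule). intros y Hy.
  apply (continuous_comp g (Rmax c)); [now apply Hg | apply continuous_Rmax_r].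
Qed.

Definition bellman (v : R -> R) (x : R) : R :=
  (1 - x) * v x + RInt (fun y => Rmax (v x) (1 + v y)) 0 x.

Section ContinuousParameter.

Variable v : R -> R.
Hypothesis v_continuous : forall y, continuous v y.

Lemma continuous_1_plus (y : R) : continuous (fun y => 1 + v y) y.
Proof. apply (continuous_plus (fun _ => 1) v); [apply continuous_const | apply v_continuous]. Qed.

Lemma ex_RInt_Rmax_1_plus (c a b : R) : ex_RInt (fun y => Rmax c (1 + v y)) a b.
Proof. apply ex_RInt_Rmax_r; intros; apply continuous_1_plus. Qed.

Lemma continuous_RInt_Rmax_param (x : R) :
  continuous (fun u => RInt (fun y => Rmax (v u) (1 + v y)) 0 u) x.
Proof.
  set (F c u := RInt (fun y => Rmax c (1 + v y)) 0 u).
  change (continuous (fun u => F (v u) u) x).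
  assert (HF : continuous (F (v x)) x).
  { apply (continuous_RInt_1 (fun y => Rmax (v x) (1 + v y)) 0).
    apply filter_forall; intros z.
    apply (RInt_correct (V := R_CompleteNormedModule)), ex_RInt_Rmax_1_plus. }
  assert (Hparam : forall u, Rabs (F (v u) u - F (v x) u) <= Rabs (u - 0) * Rabs (v u - v x)).
  { intros u.
    apply (norm_RInt_le_const_abs (V := R_NormedModule)
             (fun y => Rmax (v u) (1 + v y) - Rmax (v x) (1 + v y))).
    - intros t _. apply Rmax_Lipschitz_l.
    - apply (is_RInt_minus (V := R_NormedModule));
        apply (RInt_correct (V := R_CompleteNormedModule)), ex_RInt_Rmax_1_plus. }
  apply continuous_of_dominated with
    (B := fun u => Rabs u * Rabs (v u - v x) + Rabs (F (v x) u - F (v x) x)).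
  - assert (Habs : forall f : R -> R, continuous f x -> continuous (fun u => Rabs (f u)) x).
    { intros f Hf. apply (continuous_comp f Rabs); [exact Hf |].
      apply (continuous_abs (K := R_AbsRing)). }
    apply (continuous_plus (V := R_NormedModule)).
    + apply (continuous_mult (K := R_AbsRing)); apply Habs; [apply continuous_id |].
      apply (continuous_minus (V := R_NormedModule)); [apply v_continuous | apply continuous_const].
    + apply Habs, (continuous_minus (V := R_NormedModule)); [exact HF | apply continuous_const].
  - rewrite !Rminus_eq_0, Rabs_R0. ring.
  - intros u. specialize (Hparam u). rewrite Rminus_0_r in Hparam.
    replace (F (v u) u - F (v x) x)
      with ((F (v u) u - F (v x) u) + (F (v x) u - F (v x) x)) by ring.
    eapply Rle_trans; [apply Rabs_triang | apply Rplus_le_compat_r, Hparam].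
Qed.

End ContinuousParameter.

Lemma continuous_bellman (v : R -> R) (x : R) :
  (forall y, continuous v y) -> continuous (bellman v) x.
Proof.
  intros Hv. unfold bellman.
  apply (continuous_plus (V := R_NormedModule)).
  - apply (continuous_mult (K := R_AbsRing)); [| apply Hv].
    apply (continuous_minus (V := R_NormedModule)); [apply continuous_const | apply continuous_id].
  - now apply continuous_RInt_Rmax_param.
Qed.

Lemma vt_S_bellman (n : nat) (x : R) :
  (forall y, continuous (vt n) y) -> vt (S n) x = bellman (vt n) x.
Proof.
  intros Hv. simpl. unfold bellman. rewrite Rint_eq_RInt; [reflexivity |].
  now apply ex_RInt_Rmax_1_plus.
Qed.

Lemma continuous_vt (n : nat) (x : R) : continuous (vt n) x.
Proof.
  revert x; induction n as [| n IHn]; intros x.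
  - apply continuous_const.
  - apply (continuous_ext (bellman (vt n))).
    + intros y. symmetry. now apply vt_S_bellman.
    + now apply continuous_bellman.
Qed.

Lemma bellman_le (v w : R -> R) (x : R) :
  (forall y, 0 <= y <= 1 -> continuous v y) ->
  (forall y, 0 <= y <= 1 -> continuous w y) ->
  (forall y, 0 <= y <= 1 -> v y <= w y) ->
  0 <= x <= 1 -> bellman v x <= bellman w x.
Proof.
  intros Hv Hw Hvw Hx. unfold bellman.
  assert (Hint : forall (u : R -> R) c, (forall y, 0 <= y <= 1 -> continuous u y) ->
            ex_RInt (fun y => Rmax c (1 + u y)) 0 x).
  { intros u c Hu. apply ex_RInt_Rmax_r. rewrite Rmin_left, Rmax_right by lra. intros y Hy.
    apply (continuous_plus (fun _ => 1) u); [apply continuous_const | apply Hu; lra]. }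
  apply Rplus_le_compat.
  - apply Rmult_le_compat_l; [lra | apply Hvw; lra].
  - apply RInt_le; [lra | now apply Hint | now apply Hint |].
    intros y Hy. apply Rmax_le_compat; [apply Hvw; lra |].
    apply Rplus_le_compat_l, Hvw; lra.
Qed.

Lemma RInt_subst_sqrt (f : R -> R) (x : R) :
  0 <= x -> (forall y, 0 <= y <= x -> continuous f y) ->
  RInt f 0 x = RInt (fun t => 2 * t * f (t * t)) 0 (sqrt x).
Proof.
  intros Hx Hf.
  assert (Hs : 0 <= sqrt x) by apply sqrt_pos.
  transitivity (RInt f (0 * 0) (sqrt x * sqrt x)).
  { now rewrite Rmult_0_l, sqrt_sqrt. }
  rewrite <- (RInt_comp f (fun t => t * t) (fun t => 2 * t)); [reflexivity | |].
  - rewrite Rmin_left, Rmax_right by lra. intros t Ht. apply Hf.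
    assert (sqrt x * sqrt x = x) by (apply sqrt_sqrt; lra). split; nra.
  - intros t _. split; [auto_derive; [trivial | ring] |].
    apply (ex_derive_continuous (V := R_NormedModule)); auto_derive; trivial.
Qed.

Lemma RInt_antiderivative (F f : R -> R) (a b : R) :
  (forall t : R, is_derive F t (f t)) -> (forall t : R, continuous f t) ->
  RInt f a b = F b - F a.
Proof.
  intros HF Hf. apply is_RInt_unique.
  apply (is_RInt_derive (V := R_CompleteNormedModule)); auto.
Qed.

Lemma RInt_weight_Rmax_low (c k s : R) : 0 <= c -> 0 <= s -> k <= 1 ->
  RInt (fun t => 2 * t * Rmax k (1 + c * t)) 0 s = s * s + 2 / 3 * c * (s * s * s).
Proof.
  intros Hc Hs Hk.
  rewrite (RInt_ext _ (fun t => 2 * t * (1 + c * t))).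
  2:{ rewrite Rmin_left, Rmax_right by lra. intros t Ht. rewrite Rmax_right; nra. }
  rewrite (RInt_antiderivative (fun t => t * t + 2 / 3 * c * (t * t * t))).
  - lra.
  - intros t. auto_derive; [trivial | field].
  - intros t. apply (ex_derive_continuous (V := R_NormedModule)). auto_derive. trivial.
Qed.

Lemma RInt_weight_Rmax_split (c t0 s : R) : 0 < c -> 0 <= t0 <= s ->
  RInt (fun t => 2 * t * Rmax (1 + c * t0) (1 + c * t)) 0 s
  = (1 + c * t0) * (t0 * t0) + (s * s + 2 / 3 * c * (s * s * s))
    - (t0 * t0 + 2 / 3 * c * (t0 * t0 * t0)).
Proof.
  intros Hc Ht0.
  set (k := 1 + c * t0).
  assert (Hcont : forall t : R, continuous (fun t => 2 * t * Rmax k (1 + c * t)) t).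
  { intros t. apply (continuous_mult (K := R_AbsRing)).
    - apply (ex_derive_continuous (V := R_NormedModule)). auto_derive. trivial.
    - apply (continuous_comp (fun t => 1 + c * t) (Rmax k)); [| apply continuous_Rmax_r].
      apply (ex_derive_continuous (V := R_NormedModule)). auto_derive. trivial. }
  assert (Hex : forall a b, ex_RInt (fun t => 2 * t * Rmax k (1 + c * t)) a b).
  { intros a b. apply (@ex_RInt_continuous R_CompleteNormedModule). auto. }
  rewrite <- (RInt_Chasles (V := R_CompleteNormedModule) _ 0 t0 s) by apply Hex.
  change (plus ?p ?q) with (p + q).
  rewrite (RInt_ext _ (fun t => 2 * t * k) 0 t0).
  2:{ rewrite Rmin_left, Rmax_right by lra. intros t Ht. rewrite Rmax_left; unfold k; nra. }
  rewrite (RInt_ext _ (fun t => 2 * t * (1 + c * t)) t0 s).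
  2:{ rewrite Rmin_left, Rmax_right by lra. intros t Ht. rewrite Rmax_right; unfold k; nra. }
  rewrite (RInt_antiderivative (fun t => k * (t * t))).
  - rewrite (RInt_antiderivative (fun t => t * t + 2 / 3 * c * (t * t * t))).
    + lra.
    + intros t. auto_derive; [trivial | field].
    + intros t. apply (ex_derive_continuous (V := R_NormedModule)). auto_derive. trivial.
  - intros t. auto_derive; [trivial | ring].
  - intros t. apply (ex_derive_continuous (V := R_NormedModule)). auto_derive. trivial.
Qed.

Lemma bellman_sqrt_eq (c x : R) : 0 <= x ->
  bellman (fun y => c * sqrt y) x
  = (1 - x) * (c * sqrt x) + RInt (fun t => 2 * t * Rmax (c * sqrt x) (1 + c * t)) 0 (sqrt x).
Proof.
  intros Hx. unfold bellman. f_equal.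
  rewrite RInt_subst_sqrt; [| exact Hx |].
  - apply RInt_ext. rewrite Rmin_left, Rmax_right by apply sqrt_pos.
    intros t Ht. rewrite sqrt_square by lra. reflexivity.
  - intros y Hy. apply (continuous_comp (fun y => 1 + c * sqrt y) (Rmax (c * sqrt x)));
      [| apply continuous_Rmax_r].
    apply (continuous_plus (V := R_NormedModule)); [apply continuous_const |].
    apply (continuous_mult (K := R_AbsRing)); [apply continuous_const |].
    apply continuous_sqrt_nonneg; lra.
Qed.

Lemma accept_all_gain_le (c s d : R) :
  0 <= c -> 0 <= s <= 1 -> c * s <= 1 -> d * d = c * c + 2 -> 0 <= d ->
  c + s - c * (s * s) / 3 <= d.
Proof.
  intros Hc Hs Hcs Hd Hd0.
  assert (Hg0 : 0 <= c + s - c * (s * s) / 3) by nra.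
  enough (Hsq : (c + s - c * (s * s) / 3) * (c + s - c * (s * s) / 3) <= c * c + 2) by nra.
  destruct (Rle_lt_dec c 1) as [Hc1 | Hc1].
  - assert (Hg : c + s - c * (s * s) / 3 <= 1 + 2 * c / 3).
    { assert (0 <= (1 - s) * (3 - c * (1 + s))) by (apply Rmult_le_pos; nra). nra. }
    nra.
  - assert (Hg : c * (c + s - c * (s * s) / 3) <= c * c + 2 / 3) by nra.
    nra.
Qed.

Lemma threshold_gain_le (c e d : R) :
  1 <= c -> c * e = 1 -> d * d = c * c + 2 -> 0 <= d -> c + e - e * e / 3 <= d.
Proof.
  intros Hc Hce Hd Hd0.
  assert (He : 0 < e <= 1) by nra.
  enough (Hsq : (c + e - e * e / 3) * (c + e - e * e / 3) <= c * c + 2) by nra.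
  nra.
Qed.

Lemma bellman_sqrt_le (c x : R) : 0 <= c -> 0 <= x <= 1 ->
  bellman (fun y => c * sqrt y) x <= sqrt (c * c + 2) * sqrt x.
Proof.
  intros Hc Hx. rewrite bellman_sqrt_eq by lra.
  set (s := sqrt x). set (d := sqrt (c * c + 2)).
  assert (Hs : 0 <= s) by apply sqrt_pos.
  assert (Hx_s : x = s * s) by (symmetry; apply sqrt_sqrt; lra).
  assert (Hs1 : s <= 1) by nra.
  assert (Hd : d * d = c * c + 2) by (apply sqrt_sqrt; nra).
  assert (Hd0 : 0 <= d) by apply sqrt_pos.
  rewrite Hx_s.
  destruct (Rle_lt_dec (c * s) 1) as [Hcs | Hcs].
  - rewrite RInt_weight_Rmax_low by lra.
    assert (Hg : c + s - c * (s * s) / 3 <= d).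
    { apply accept_all_gain_le; lra. }
    nra.
  - assert (Hc1 : 1 <= c).
    { assert (c * s <= c * 1) by (apply Rmult_le_compat_l; lra). lra. }
    set (e := / c).
    assert (Hce : c * e = 1) by (unfold e; field; lra).
    assert (He : 0 < e) by (unfold e; apply Rinv_0_lt_compat; lra).
    set (t0 := s - e).
    replace (c * s) with (1 + c * t0) by (unfold t0; lra).
    rewrite RInt_weight_Rmax_split by (unfold t0; nra).
    assert (Hval : (1 - s * s) * (1 + c * t0)
                   + ((1 + c * t0) * (t0 * t0) + (s * s + 2 / 3 * c * (s * s * s))
                      - (t0 * t0 + 2 / 3 * c * (t0 * t0 * t0)))
                   = s * (c + e) - e * e / 3).
    { unfold t0, e. field. lra. }
    rewrite Hval.
    assert (Hgain := threshold_gain_le c e d Hc1 Hce Hd Hd0).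
    assert (Hdce : d <= c + e).
    { assert ((c + e) * (c + e) = d * d + e * e).
      { rewrite Hd. replace ((c + e) * (c + e)) with (c * c + 2 * (c * e) + e * e) by ring.
        rewrite Hce. ring. }
      nra. }
    nra.
Qed.

Lemma vt_le_sqrt (n : nat) (x : R) : 0 <= x <= 1 -> vt n x <= sqrt (2 * INR n) * sqrt x.
Proof.
  revert x; induction n as [| n IHn]; intros x Hx.
  - simpl. apply Rmult_le_pos; apply sqrt_pos.
  - rewrite vt_S_bellman by apply continuous_vt.
    set (c := sqrt (2 * INR n)).
    assert (Hc : c * c + 2 = 2 * INR (S n)).
    { unfold c. rewrite sqrt_sqrt, S_INR; [ring |]. pose proof (pos_INR n). lra. }
    rewrite <- Hc.
    apply Rle_trans with (bellman (fun y => c * sqrt y) x).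
    2:{ apply bellman_sqrt_le; [apply sqrt_pos | exact Hx]. }
    apply bellman_le; [intros; apply continuous_vt | | exact IHn | exact Hx].
    intros y Hy. apply (continuous_mult (K := R_AbsRing)); [apply continuous_const |].
    apply continuous_sqrt_nonneg. lra.
Qed.

Theorem mainTheorem4 (n : nat) (hn : (1 <= n)%nat) : vt n 1 <= sqrt (2 * INR n).
Proof.
  pose proof (vt_le_sqrt n 1 ltac:(lra)) as H. rewrite sqrt_1, Rmult_1_r in H. exact H.
Qed.
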